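(* Let $A \in \mathbb{R}^{n\times p}$. Let $f:\mathbb{R}^n\to\mathbb{R}$ be convex, finite everywhere and Lipschitz-continuous, and let $C$ be the domain of its Fenchel conjugate $f^\ast$. Let $h:\mathbb{R}^p\to\mathbb{R}\cup\{+\infty\}$ be lower-semicontinuous, $\mu$-strongly convex and essentially smooth. Let $(\rho_t)_{t\geq1}$ be step sizes in $[0,1]$ and $y_0\in C$. Consider: (i) the generalized conditional gradient recursion: for $t\geq1$, $$x_{t-1} = \arg\min_{x\in\mathbb{R}^p} h(x) + x^\top A^\top y_{t-1} = (h^\ast)'(-A^\top y_{t-1}),\quad \bar y_{t-1}\in\arg\max_{y\in C} y^\top A x_{t-1} - f^\ast(y),\quad y_t = (1-\rho_t)y_{t-1} + \rho_t \bar y_{t-1};$$ (ii) the mirror descent recursion started from $x_0 = (h^\ast)'(-A^\top y_0)$: for $t\geq 1$, $$\bar y_{t-1} \in \arg\max_{y\in C}\ y^\top A x_{t-1} - f^\ast(y),\qquad x_t = \arg\min_{x\in\mathbb{R}^p}\ h(x) - (1-\rho_t)\, x^\top h'(x_{t-1}) + \rho_t\, x^\top A^\top \bar y_{t-1}.$$ Then these two recursions are equivalent: (with the same choices of maximizers $\bar y_{t-1}$) they generate the same sequence $(x_t)$, and $h'(x_t) = -A^\top y_t$ for all $t\geq0$.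
   Context: $h$ is essentially smooth if it is differentiable on the interior of its domain $K$ (assumed nonempty) and $\|h'(x)\|\to+\infty$ as $x$ approaches the boundary of $K$; then $h'$ is a bijection from ${\rm int}(K)$ onto $\mathbb{R}^p$, and $(h^\ast)'$ is its inverse. The Fenchel conjugate is $f^\ast(y)=\sup_z y^\top z - f(z)$; $h^\ast$ is differentiable and $(h^\ast)'(z)$ is the unique maximizer of $x^\top z - h(x)$. *)

From HB Require Import structures.
From mathcomp Require Import all_boot all_order all_algebra.
From mathcomp Require Import all_classical all_reals all_analysis.
Set Implicit Arguments. Unset Strict Implicit. Unset Printing Implicit Defensive.
Import Order.TTheory GRing.Theory Num.Theory.
Import numFieldNormedType.Exports.
Local Open Scope classical_set_scope.
Local Open Scope ring_scope.

Definition dotv (R : realType) (k : nat) (u v : 'cV[R]_k) : R := (u^T *m v) 0 0.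

Definition sqnorm (R : realType) (k : nat) (v : 'cV[R]_k) : R := dotv v v.

Definition convex_fun (R : realType) (k : nat) (f : 'cV[R]_k -> R) : Prop :=
  forall (x y : 'cV[R]_k) (l : R), 0 <= l <= 1 ->
    f (l *: x + (1 - l) *: y) <= l * f x + (1 - l) * f y.

(* Lipschitz continuity (norms on R^k are all equivalent; we use the
   library's norm on matrices) *)
Definition lipschitz_fun (R : realType) (k : nat) (f : 'cV[R]_k -> R) : Prop :=
  exists L : R, forall x y : 'cV[R]_k, `|f x - f y| <= L * `|x - y|.

Definition fenchel (R : realType) (k : nat) (f : 'cV[R]_k -> R) (y : 'cV[R]_k)
  : \bar R := ereal_sup [set ((dotv y z - f z)%:E) | z in [set: 'cV[R]_k]].

Definition edom (R : realType) (k : nat) (g : 'cV[R]_k -> \bar R) : set 'cV[R]_k :=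
  [set x | (g x < +oo)%E].

Definition strongly_convex (R : realType) (k : nat) (mu : R)
  (h : 'cV[R]_k -> \bar R) : Prop :=
  0 < mu /\
  forall (x y : 'cV[R]_k) (l : R), 0 < l < 1 ->
    (h (l *: x + (1 - l) *: y)%R <=
       l%:E * h x + (1 - l)%R%:E * h y - (mu / 2 * l * (1 - l) * sqnorm (x - y)%R)%R%:E)%E.

(* gradient of h at x: the vector of partial derivatives of h (which is
   finite near every interior point of its domain) *)
Definition grad (R : realType) (k : nat) (h : 'cV[R]_k -> \bar R) (x : 'cV[R]_k)
  : 'cV[R]_k :=
  \col_i ('D_(delta_mx i 0) (fun z => fine (h z)) x).

Definition essentially_smooth (R : realType) (k : nat) (h : 'cV[R]_k -> \bar R)
  : Prop :=
  let K := edom h in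
  interior K !=set0 /\
  (forall x, interior K x -> differentiable (fun z => fine (h z)) x) /\
  (forall (u : nat -> 'cV[R]_k) (b : 'cV[R]_k),
      (forall m, interior K (u m)) -> u @ \oo --> b ->
      closure K b -> ~ interior K b ->
      (fun m => `|grad h (u m)|) @ \oo --> +oo).

Definition is_argmin (R : realType) (k : nat) (phi : 'cV[R]_k -> \bar R)
  (x : 'cV[R]_k) : Prop := forall z, (phi x <= phi z)%E.

Definition is_argmax_on (R : realType) (k : nat) (C : set 'cV[R]_k)
  (psi : 'cV[R]_k -> \bar R) (yb : 'cV[R]_k) : Prop :=
  C yb /\ forall y, C y -> (psi y <= psi yb)%E.

(* generalized conditional gradient recursion (with y given by
   y_t = (1-rho_t) y_{t-1} + rho_t ybar_{t-1}): for all t >= 1,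
   x_{t-1} = argmin_x h(x) + x^T A^T y_{t-1},
   ybar_{t-1} in argmax_{y in C} y^T A x_{t-1} - f^*(y) *)
Definition gcg_rec (R : realType) (n p : nat) (A : 'M[R]_(n, p))
  (f : 'cV[R]_n -> R) (h : 'cV[R]_p -> \bar R)
  (x : nat -> 'cV[R]_p) (y ybar : nat -> 'cV[R]_n) : Prop :=
  forall s : nat,
    is_argmin (fun z => (h z + (dotv z (A^T *m y s))%:E)%E) (x s) /\
    is_argmax_on (edom (fenchel f))
      (fun w => ((dotv w (A *m x s))%:E - fenchel f w)%E) (ybar s).

Definition md_rec (R : realType) (n p : nat) (A : 'M[R]_(n, p))
  (f : 'cV[R]_n -> R) (h : 'cV[R]_p -> \bar R) (rho : nat -> R)
  (y0 : 'cV[R]_n) (x : nat -> 'cV[R]_p) (ybar : nat -> 'cV[R]_n) : Prop :=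
  is_argmin (fun z => (h z + (dotv z (A^T *m y0))%:E)%E) (x 0%N) /\
  forall s : nat,
    is_argmax_on (edom (fenchel f))
      (fun w => ((dotv w (A *m x s))%:E - fenchel f w)%E) (ybar s) /\
    is_argmin (fun z => (h z + (- (1 - rho s.+1) * dotv z (grad h (x s))
                                 + rho s.+1 * dotv z (A^T *m ybar s))%:E)%E)
              (x s.+1).

From HB Require Import structures.
From mathcomp Require Import all_boot all_order all_algebra.
From mathcomp Require Import all_classical all_reals all_analysis.
From mathcomp Require Import ring lra.
Import Order.TTheory GRing.Theory Num.Theory.
Import numFieldNormedType.Exports.
Local Open Scope classical_set_scope.
Local Open Scope ring_scope.
Set Implicit Arguments. Unset Strict Implicit.

(* The two recursions differ only in the linear term of the subproblem
   defining x_t, and they coincide as soon as h'(x_t) = -A^T y_t, since then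
   -(1 - rho) h'(x_t) + rho A^T ybar_t = A^T y_{t+1}.  That identity is the
   first-order optimality condition for x_t = argmin h + <., A^T y_t>, which is
   available because essential smoothness keeps every such minimizer x in the
   interior of dom h: were x on the boundary, the gradients at the points
   x + t (z0 - x), t -> 0, with z0 interior, would blow up, whereas convexity
   together with the minimality of x bounds each of their components by values
   of h on a small ball around z0. *)

Section DotProduct.
Variables (R : realType) (k : nat).
Implicit Types u v w : 'cV[R]_k.

Lemma dotvE u v : dotv u v = \sum_i u i 0 * v i 0.
Proof. by rewrite /dotv mxE; apply: eq_bigr => i _; rewrite mxE. Qed.

Lemma dotvC u v : dotv u v = dotv v u.
Proof. by rewrite !dotvE; apply: eq_bigr => i _; rewrite mulrC. Qed.

Lemma dotvDr u v w : dotv u (v + w) = dotv u v + dotv u w.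
Proof.
by rewrite !dotvE -big_split; apply: eq_bigr => i _; rewrite mxE mulrDr.
Qed.

Lemma dotvZr (a : R) u v : dotv u (a *: v) = a * dotv u v.
Proof.
by rewrite !dotvE mulr_sumr; apply: eq_bigr => i _; rewrite mxE mulrCA.
Qed.

Lemma dotvNr u v : dotv u (- v) = - dotv u v.
Proof. by rewrite -scaleN1r dotvZr mulN1r. Qed.

Lemma dotvDl u v w : dotv (v + w) u = dotv v u + dotv w u.
Proof. by rewrite dotvC dotvDr !(dotvC u). Qed.

Lemma dotvZl (a : R) u v : dotv (a *: v) u = a * dotv v u.
Proof. by rewrite dotvC dotvZr dotvC. Qed.

Lemma dotvNl u v : dotv (- v) u = - dotv v u.
Proof. by rewrite dotvC dotvNr dotvC. Qed.

Lemma dotv_delta u i : dotv u (delta_mx i 0) = u i 0.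
Proof.
rewrite dotvE (bigD1 i) //= big1 => [|j /negPf ji]; rewrite mxE.
  by rewrite !eqxx mulr1 addr0.
by rewrite ji mulr0.
Qed.

Lemma sqnorm_ge0 v : 0 <= sqnorm v.
Proof. by rewrite /sqnorm dotvE sumr_ge0 // => i _; rewrite -expr2 sqr_ge0. Qed.

End DotProduct.

Lemma norm_delta_mx_le1 (R : realType) (k : nat) (i : 'I_k) :
  `|delta_mx i 0 : 'cV[R]_k| <= 1.
Proof.
rewrite [leLHS]/Num.norm /= mx_normrE.
apply/bigmax_leP; split => // -[a b] _ /=.
by rewrite mxE; case: (_ && _); rewrite ?normr1 ?normr0.
Qed.

Section DirectionalDerivative.
Variables (R : realType) (k : nat) (F : 'cV[R]_k -> R) (u v : 'cV[R]_k).
Hypothesis dF : differentiable F u.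

Lemma derive_slope_cvg :
  (fun t => t^-1 * (F (t *: v + u) - F u)) @ 0^'+ --> 'D_v F u.
Proof.
have /cvg_ex[l Hl] := diff_derivable (v:=v) dF.
rewrite /derive (cvg_lim _ Hl) //.
apply: cvg_trans Hl; apply: cvg_app; apply: within_subset => t /= /gt_eqF ->//.
Qed.

Lemma derive_ge_of_slopes L e : 0 < e ->
  (forall t, 0 < t < e -> L <= t^-1 * (F (t *: v + u) - F u)) ->
  L <= 'D_v F u.
Proof.
move=> e0 H; apply: (cvgr_to_ge derive_slope_cvg); near=> t; apply: H.
apply/andP; split; near: t; [exact: nbhs_right_gt| exact: nbhs_right_lt].
Unshelve. all: by end_near.
Qed.

Lemma derive_le_of_slopes L e : 0 < e ->
  (forall t, 0 < t < e -> t^-1 * (F (t *: v + u) - F u) <= L) ->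
  'D_v F u <= L.
Proof.
move=> e0 H; apply: (cvgr_to_le derive_slope_cvg); near=> t; apply: H.
apply/andP; split; near: t; [exact: nbhs_right_gt| exact: nbhs_right_lt].
Unshelve. all: by end_near.
Qed.

Lemma derive_dotv_partials :
  'D_v F u = dotv (\col_i 'D_(delta_mx i 0) F u) v.
Proof.
rewrite deriveE // dotvE {1}(matrix_sum_delta v) linear_sum /=.
by apply: eq_bigr => i _; rewrite big_ord1 linearZ /= mxE deriveE // mulrC.
Qed.

End DirectionalDerivative.

Section InteriorPoints.
Variables (R : realType) (k : nat) (K : set 'cV[R]_k).

Lemma interior_ball u :
  interior K u -> exists2 r : R, 0 < r & forall v, `|u - v| < r -> K v.
Proof.
rewrite /interior /= => /nbhs_ballP [r r0 Hr]; exists r => // v uv.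
by apply: Hr; rewrite -ball_normE.
Qed.

Lemma interior_ray u v :
  interior K u -> exists2 e : R, 0 < e & forall t, 0 < t < e -> K (t *: v + u).
Proof.
move=> /interior_ball [r r0 Hr]; exists (r / (`|v| + 1)).
  by rewrite divr_gt0 // ltr_wpDl.
move=> t /andP[t0 te]; apply: Hr.
rewrite opprD addrCA subrr addr0 normrN normrZ gtr0_norm //.
have v1 : 0 < `|v| + 1 by rewrite ltr_wpDl.
apply: (@le_lt_trans _ _ (t * (`|v| + 1))); first by rewrite ler_pM2l // lerDl.
by rewrite -ltr_pdivlMr.
Qed.

End InteriorPoints.

Definition econvex (R : realType) (k : nat) (h : 'cV[R]_k -> \bar R) : Prop :=
  forall (x y : 'cV[R]_k) (l : R), 0 < l < 1 ->
    (h (l *: x + (1 - l) *: y)%R <= l%:E * h x + (1 - l)%R%:E * h y)%E.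

Lemma strongly_convex_econvex (R : realType) (k : nat) (mu : R)
    (h : 'cV[R]_k -> \bar R) :
  strongly_convex mu h -> econvex h.
Proof.
move=> [mu0 sc] x y l l01; apply: le_trans (sc x y l l01) _.
rewrite -[leRHS]sube0 leeB // lee_fin; case/andP: l01 => l0 l1.
by rewrite !mulr_ge0 ?sqnorm_ge0 ?subr_ge0 ?ltW // divr_ge0 // ltW.
Qed.

Section ConvexExtendedFunction.
Variables (R : realType) (k : nat) (h : 'cV[R]_k -> \bar R).
Hypothesis h_neqNy : forall x, h x != -oo%E.
Hypothesis h_convex : econvex h.
Local Notation K := (edom h).

Lemma edom_fineK z : K z -> h z = (fine (h z))%:E.
Proof. by move=> Kz; rewrite fineK // fin_numE h_neqNy -ltey. Qed.

Lemma edom_convex_comb x y l : K x -> K y -> 0 < l < 1 ->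
  K (l *: x + (1 - l) *: y) /\
  fine (h (l *: x + (1 - l) *: y)) <= l * fine (h x) + (1 - l) * fine (h y).
Proof.
move=> Kx Ky l01; have H := h_convex x y l01.
rewrite (edom_fineK Kx) (edom_fineK Ky) -!EFinM -EFinD in H.
have Kz : K (l *: x + (1 - l) *: y).
  by rewrite /edom /=; apply: le_lt_trans H _; rewrite ltry.
by split => //; move: H; rewrite (edom_fineK Kz) lee_fin.
Qed.

Lemma interior_edom_segment z0 x t : interior K z0 -> K x -> 0 < t < 1 ->
  interior K (t *: (z0 - x) + x).
Proof.
move=> /interior_ball [r r0 Hr] Kx t01; have /andP[t0 t1] := t01.
apply/nbhs_ballP; exists (t * r) => /=; first by rewrite mulr_gt0.
move=> v; rewrite -ball_normE /= => uv.
set w := z0 + t^-1 *: (v - (t *: (z0 - x) + x)).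
have Kw : K w.
  apply: Hr; rewrite /w opprD addrA subrr sub0r normrN normrZ.
  rewrite gtr0_norm ?invr_gt0 // -ltr_pdivlMl ?invr_gt0 // invrK.
  by rewrite -normrN opprB.
have -> : v = t *: w + (1 - t) *: x.
  by apply/matrixP => i j; rewrite /w !mxE; field; rewrite lt0r_neq0.
by case: (edom_convex_comb Kw Kx t01).
Qed.

Hypothesis h_diff :
  forall x, interior K x -> differentiable (fun z => fine (h z)) x.

Lemma grad_subgradient u w : interior K u -> K w ->
  fine (h u) + dotv (grad h u) (w - u) <= fine (h w).
Proof.
move=> Iu Kw; have Ku := interior_subset Iu.
rewrite /grad -derive_dotv_partials; last exact: h_diff.
suff : 'D_(w - u) (fun z => fine (h z)) u <= fine (h w) - fine (h u) by lra.
apply: (derive_le_of_slopes (h_diff Iu) (e:=1)) => // t /andP[t0 t1].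
have -> : t *: (w - u) + u = t *: w + (1 - t) *: u.
  by apply/matrixP => i j; rewrite !mxE; ring.
have [_ /=] := edom_convex_comb Kw Ku (l:=t) (ltac:(by rewrite t0 t1)).
move=> H; rewrite -[X in _ <= X](mulKf (lt0r_neq0 t0)) ler_pM2l ?invr_gt0 //.
by rewrite mulrBr; lra.
Qed.

Lemma grad_eq_of_interior_min x c : interior K x ->
  (forall z, K z -> fine (h x) + dotv x c <= fine (h z) + dotv z c) ->
  grad h x = - c.
Proof.
move=> Ix xmin.
have slope v : - dotv v c <= dotv (grad h x) v.
  rewrite /grad -derive_dotv_partials; last exact: h_diff.
  have [e e0 He] := interior_ray v Ix.
  apply: (derive_ge_of_slopes (h_diff Ix) e0) => t /andP[t0 te].
  have := xmin _ (He t (ltac:(by rewrite t0 te))).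
  rewrite dotvDl dotvZl => H.
  rewrite -[leLHS](mulKf (lt0r_neq0 t0)) ler_pM2l ?invr_gt0 //; lra.
apply/matrixP => i j; rewrite [j]ord1 [RHS]mxE.
have := slope (delta_mx i 0); have := slope (- delta_mx i 0).
rewrite !dotvNr !dotvNl !dotv_delta (dotvC (delta_mx i 0)) dotv_delta; lra.
Qed.

Section MinimizerOnTheBoundary.
Variables (c x z0 : 'cV[R]_k).
Hypotheses (Kx : K x) (Iz0 : interior K z0).
Hypothesis x_min :
  forall z, K z -> fine (h x) + dotv x c <= fine (h z) + dotv z c.

(* Minimality of x gives <g, z0 - x> >= -<z0 - x, c> for g = h'(x + t (z0 - x)),
   which makes the bound uniform in t. *)
Lemma grad_segment_dot_le t v : 0 < t < 1 -> K (z0 + v) ->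
  dotv (grad h (t *: (z0 - x) + x)) v
    <= fine (h (z0 + v)) - fine (h x) + dotv (z0 - x) c.
Proof.
move=> t01 Kw; have /andP[t0 t1] := t01.
set d := z0 - x; set u := t *: d + x; set g := grad h u.
have Iu : interior K u := interior_edom_segment Iz0 Kx t01.
have min_u : fine (h x) + dotv x c <= fine (h u) + (t * dotv d c + dotv x c).
  by have := x_min (interior_subset Iu); rewrite {2}/u dotvDl dotvZl.
have sub_x := grad_subgradient Iu Kx.
have sub_w := grad_subgradient Iu Kw.
have Ex : x - u = - (t *: d) by apply/matrixP => i j; rewrite /u !mxE; ring.
have Ew : z0 + v - u = (1 - t) *: d + v.
  by apply/matrixP => i j; rewrite /u /d !mxE; ring.
rewrite Ex dotvNr dotvZr in sub_x; rewrite Ew dotvDr dotvZr -/g in sub_w.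
have gd : - dotv d c <= dotv g d.
  have : 0 <= t * (dotv g d + dotv d c) by rewrite mulrDr; lra.
  by rewrite pmulr_rge0 // => ?; lra.
have : 0 <= (1 - t) * (dotv g d + dotv d c) by apply: mulr_ge0; lra.
lra.
Qed.

Lemma grad_segment_bounded :
  exists M, forall t, 0 < t < 1 -> `|grad h (t *: (z0 - x) + x)| <= M.
Proof.
have [r r0 Hr] := interior_ball Iz0.
pose dl := r / 2.
have dl0 : 0 < dl by rewrite divr_gt0.
pose w (i : 'I_k) (s : R) : 'cV[R]_k := (s * dl) *: delta_mx i 0.
have Kw i s : `|s| = 1 -> K (z0 + w i s).
  move=> s1; apply: Hr; rewrite opprD addrA subrr sub0r normrN normrZ normrM.
  rewrite s1 mul1r gtr0_norm // (@le_lt_trans _ _ dl) //.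
    by rewrite -[leRHS]mulr1 ler_pM2l // norm_delta_mx_le1.
  by rewrite /dl ltr_pdivrMr // ltr_pMr // ltr1n.
pose B i := `|fine (h (z0 + w i 1))| + `|fine (h (z0 + w i (-1)))|.
pose S := \sum_i B i + `|fine (h x)| + `|dotv (z0 - x) c|.
have BS i : B i <= \sum_j B j.
  by rewrite (bigD1 i) //= lerDl sumr_ge0 // => j _; rewrite addr_ge0.
exists (S / dl) => t t01; set g := grad h _.
have gi i s : `|s| = 1 -> s * dl * g i 0 <=
    `|fine (h (z0 + w i s))| + `|fine (h x)| + `|dotv (z0 - x) c|.
  move=> s1; have := grad_segment_dot_le (v := w i s) t01 (Kw i s s1).
  rewrite dotvZr dotv_delta -/g.
  have := ler_norm (fine (h (z0 + w i s))); have := ler_norm (dotv (z0 - x) c).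
  have := ler_norm (- fine (h x)); rewrite normrN; lra.
have S0 : 0 <= S.
  by rewrite /S !addr_ge0 // sumr_ge0 // => i _; rewrite addr_ge0.
rewrite [leLHS]/Num.norm /= mx_normrE; apply/bigmax_leP.
split => [|[a b] _ /=]; first by rewrite divr_ge0 // ltW.
rewrite [b]ord1 ler_pdivlMr // mulrC -(gtr0_norm dl0) -normrM ler_norml.
have := gi a 1 (normr1 _); have := gi a (-1) (ltac:(by rewrite normrN normr1)).
have := BS a; have := normr_ge0 (fine (h (z0 + w a 1))).
have := normr_ge0 (fine (h (z0 + w a (-1)))); rewrite /S /B => *.
apply/andP; split; lra.
Qed.

End MinimizerOnTheBoundary.

Hypothesis h_interior_neq0 : interior K !=set0.
Hypothesis h_grad_blowup :
  forall (u : nat -> 'cV[R]_k) (b : 'cV[R]_k),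
    (forall m, interior K (u m)) -> u @ \oo --> b ->
    closure K b -> ~ interior K b ->
    (fun m => `|grad h (u m)|) @ \oo --> +oo.

Lemma interior_of_min x c : K x ->
  (forall z, K z -> fine (h x) + dotv x c <= fine (h z) + dotv z c) ->
  interior K x.
Proof.
move=> Kx x_min; have [//|nIx] := pselect (interior K x); exfalso.
have [z0 Iz0] := h_interior_neq0.
have [M HM] := grad_segment_bounded Kx Iz0 x_min.
pose t (m : nat) : R := (m.+2%:R)^-1.
have t01 m : 0 < t m < 1 by rewrite invr_gt0 ltr0n /= invf_lt1 ?ltr0n // ltr1n.
have t_cvg0 : t @ \oo --> (0 : R).
  have := @cvg_harmonic R; rewrite -cvg_shiftS; apply: cvg_trans.
  by apply: near_eq_cvg; apply: nearW => m; rewrite /t /harmonic.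
have u_cvg : (fun m => t m *: (z0 - x) + x) @ \oo --> x.
  have := cvgD (cvgZ t_cvg0 (cvg_cst (z0 - x))) (cvg_cst x).
  by rewrite scale0r add0r; apply.
have := h_grad_blowup (fun m => interior_edom_segment Iz0 Kx (t01 m)) u_cvg
  (subset_closure Kx) nIx.
move/cvgryPge => /(_ (M + 1)) /filter_ex [m /= Hm].
by have := HM _ (t01 m); lra.
Qed.

Lemma argmin_grad x c :
  is_argmin (fun z => (h z + (dotv z c)%:E)%E) x -> grad h x = - c.
Proof.
move=> x_argmin; have [z0 /interior_subset Kz0] := h_interior_neq0.
have Kx : K x.
  rewrite /edom /= ltey; apply/negP => /eqP hx.
  by have := x_argmin z0; rewrite /= hx (edom_fineK Kz0).
have x_min z : K z -> fine (h x) + dotv x c <= fine (h z) + dotv z c.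
  by move=> Kz; have := x_argmin z; rewrite /= (edom_fineK Kx) (edom_fineK Kz).
exact: grad_eq_of_interior_min (interior_of_min Kx x_min) x_min.
Qed.

End ConvexExtendedFunction.

Lemma argmin_linear_grad (R : realType) (k : nat) (mu : R)
    (h : 'cV[R]_k -> \bar R) (c x : 'cV[R]_k) :
  (forall z, h z != -oo%E) -> strongly_convex mu h -> essentially_smooth h ->
  is_argmin (fun z => (h z + (dotv z c)%:E)%E) x -> grad h x = - c.
Proof.
move=> h_neqNy /strongly_convex_econvex h_convex [h_int [h_diff h_blowup]].
exact: argmin_grad.
Qed.

Lemma eq_is_argmin (R : realType) (k : nat) (phi psi : 'cV[R]_k -> \bar R) x :
  phi =1 psi -> is_argmin phi x -> is_argmin psi x.
Proof. by move=> e H z; rewrite -!e. Qed.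

Lemma md_linear_termE (R : realType) (n p : nat) (A : 'M[R]_(n, p)) (r : R)
    (y yb : 'cV[R]_n) (z : 'cV[R]_p) :
  - (1 - r) * dotv z (- (A^T *m y)) + r * dotv z (A^T *m yb)
  = dotv z (A^T *m ((1 - r) *: y + r *: yb)).
Proof. by rewrite mulmxDr -!scalemxAr dotvDr !dotvZr dotvNr; ring. Qed.

Theorem proposition2 (R : realType) (n p : nat) (A : 'M[R]_(n, p))
  (f : 'cV[R]_n -> R) (h : 'cV[R]_p -> \bar R) (mu : R)
  (rho : nat -> R) (y0 : 'cV[R]_n) :
  convex_fun f -> lipschitz_fun f ->
  (forall x, h x != -oo%E) ->
  lower_semicontinuous h -> strongly_convex mu h -> essentially_smooth h ->
  (forall t : nat, (1 <= t)%N -> 0 <= rho t <= 1) ->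
  edom (fenchel f) y0 ->
  forall (x : nat -> 'cV[R]_p) (y ybar : nat -> 'cV[R]_n),
    y 0%N = y0 ->
    (forall s : nat, y s.+1 = (1 - rho s.+1) *: y s + rho s.+1 *: ybar s) ->
    (gcg_rec A f h x y ybar <-> md_rec A f h rho y0 x ybar) /\
    (gcg_rec A f h x y ybar -> forall t : nat, grad h (x t) = - (A^T *m y t)).
Proof.
move=> _ _ h_neqNy _ h_sc h_es _ _ x y ybar y_0 y_S.
have grad_x : gcg_rec A f h x y ybar -> forall t, grad h (x t) = - (A^T *m y t).
  by move=> H t; exact: argmin_linear_grad h_neqNy h_sc h_es (H t).1.
have mdE s : grad h (x s) = - (A^T *m y s) ->
    (fun z => (h z + (- (1 - rho s.+1) * dotv z (grad h (x s))
                       + rho s.+1 * dotv z (A^T *m ybar s))%:E)%E)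
    =1 (fun z => (h z + (dotv z (A^T *m y s.+1))%:E)%E).
  by move=> gx z; rewrite gx md_linear_termE -y_S.
split => //; split => [H | [H0 Hs]].
- split; first by rewrite -y_0; exact: (H 0%N).1.
  move=> s; split; first exact: (H s).2.
  exact: eq_is_argmin (fsym (mdE s (grad_x H s))) (H s.+1).1.
- have x_argmin s :
      is_argmin (fun z => (h z + (dotv z (A^T *m y s))%:E)%E) (x s).
    elim: s => [|s IH]; first by rewrite y_0.
    apply: eq_is_argmin (Hs s).2; apply/mdE.
    exact: argmin_linear_grad h_neqNy h_sc h_es IH.
  by move=> s; split; [exact: x_argmin | exact: (Hs s).1].
Qed.
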